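(* Let $\mathbf G$ be a torsion-free locally cyclic group such that $\mathcal O_{\mathbf G}(x)\cong\mathcal I_{\mathbf G}(x)$ (as graphs) for all $x\in G$. Then $\mathbf G\cong(\mathbb Q,+)$.
   Context: For a group $\mathbf G$, the directed $Z^\pm$-power graph $\vec{\mathcal G}^\pm(\mathbf G)$ has vertex set $G$ and an arc $x\to y$ for distinct $x,y$ iff $y=x^n$ for some $n\in\mathbb Z\setminus\{0\}$; its underlying simple graph is the $Z^\pm$-power graph $\mathcal G^\pm(\mathbf G)$ (distinct $x,y$ adjacent iff $y=x^n$ or $x=y^n$ for some nonzero integer $n$). For $x\in G$ let $I_{\mathbf G}(x)=\{y\in G\setminus\{x^{-1}\}\mid y\to x\}$ and $O_{\mathbf G}(x)=\{y\in G\setminus\{x^{-1}\}\mid x\to y\}$ (arcs in $\vec{\mathcal G}^\pm(\mathbf G)$), and let $\mathcal I_{\mathbf G}(x)$, $\mathcal O_{\mathbf G}(x)$ be the subgraphs of $\mathcal G^\pm(\mathbf G)$ induced by $I_{\mathbf G}(x)$, $O_{\mathbf G}(x)$ respectively. *)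

From HB Require Import structures.
From Stdlib Require Lists.List.
From mathcomp Require Import all_boot all_order all_algebra.
Set Implicit Arguments. Unset Strict Implicit. Unset Printing Implicit Defensive.
Import GRing.Theory Num.Theory.

Record is_group (G : Type) (mul : G -> G -> G) (one : G) (inv : G -> G) : Prop :=
  { grp_assoc : forall a b c, mul a (mul b c) = mul (mul a b) c;
    grp_mul1g : forall a, mul one a = a;
    grp_mulg1 : forall a, mul a one = a;
    grp_mulVg : forall a, mul (inv a) a = one;
    grp_mulgV : forall a, mul a (inv a) = one }.

Definition npow (G : Type) (mul : G -> G -> G) (one : G) (x : G) (k : nat) : G :=
  iter k (mul x) one.

Definition zpow (G : Type) (mul : G -> G -> G) (one : G) (inv : G -> G)
    (x : G) (n : int) : G :=
  match n with
  | Posz k => npow mul one x k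
  | Negz k => inv (npow mul one x k.+1)
  end.

Definition torsion_free (G : Type) (mul : G -> G -> G) (one : G) (inv : G -> G) : Prop :=
  forall (x : G) (n : int), n != 0 -> zpow mul one inv x n = one -> x = one.

Inductive gen (G : Type) (mul : G -> G -> G) (one : G) (inv : G -> G)
    (l : list G) : G -> Prop :=
  | gen_base : forall x, Stdlib.Lists.List.In x l -> gen mul one inv l x
  | gen_one : gen mul one inv l one
  | gen_inv : forall x, gen mul one inv l x -> gen mul one inv l (inv x)
  | gen_mul : forall x y, gen mul one inv l x -> gen mul one inv l y ->
              gen mul one inv l (mul x y).

Definition locally_cyclic (G : Type) (mul : G -> G -> G) (one : G) (inv : G -> G) : Prop :=
  forall l : list G, exists g : G,
    gen mul one inv l g /\
    (forall x, gen mul one inv l x <-> exists n : int, x = zpow mul one inv g n).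

Definition arc (G : Type) (mul : G -> G -> G) (one : G) (inv : G -> G) (x y : G) : Prop :=
  x <> y /\ exists n : int, n != 0 /\ y = zpow mul one inv x n.

Definition adj (G : Type) (mul : G -> G -> G) (one : G) (inv : G -> G) (x y : G) : Prop :=
  arc mul one inv x y \/ arc mul one inv y x.

Definition Iset (G : Type) (mul : G -> G -> G) (one : G) (inv : G -> G) (x y : G) : Prop :=
  y <> inv x /\ arc mul one inv y x.
Definition Oset (G : Type) (mul : G -> G -> G) (one : G) (inv : G -> G) (x y : G) : Prop :=
  y <> inv x /\ arc mul one inv x y.

Definition induced_iso (V : Type) (e : V -> V -> Prop) (A B : V -> Prop) : Prop :=
  exists f : {y : V | A y} -> {y : V | B y},
    bijective f /\
    forall a b : {y : V | A y}, e (proj1_sig a) (proj1_sig b) <->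
                               e (proj1_sig (f a)) (proj1_sig (f b)).

Definition iso_to_Q (G : Type) (mul : G -> G -> G) : Prop :=
  exists f : G -> rat, bijective f /\ forall a b, f (mul a b) = (f a + f b)%R.

(* Written additively, [G] is abelian, since any two elements are powers of a
   common one; fixing [g <> 0], the map sending [y] to [k / m], where
   [m y = k g], is then an injective homomorphism into [Q], onto as soon as [G]
   is divisible.  Divisibility is read off the graphs.  Call [w] dominated by
   [u] when the closed neighbourhood of [w] lies inside that of [u].  Through
   [n |-> n x], [O(x)] is the comparability graph of divisibility on the
   integers [n] with [|n| >= 2]; there a vertex [u] dominates [-u] and nothing
   else unless [|u|] is a prime power, in which case it dominates infinitely
   many vertices.  If [y] is not divisible by the prime [p], put [x = p^2 y]:
   through [n |-> x / n], [I(x)] is the same graph restricted to a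
   divisor-closed set of integers containing [p^2] but no multiple of [p^3],
   and there [p] dominates exactly [-p], [p^2] and [-p^2].  So [O(x)] and
   [I(x)] are not isomorphic. *)

From HB Require Import structures.
From Pilot Require Import Defs.
From mathcomp Require Import all_boot all_order all_algebra.
From mathcomp Require Import zify ring.
From mathcomp Require boolp classical_sets.

Set Implicit Arguments. Unset Strict Implicit. Unset Printing Implicit Defensive.
Import GRing.Theory Num.Theory.

(** * Domination in graphs *)

Section Domination.
Variables (T : Type) (e : T -> T -> Prop) (P : T -> Prop).

Definition dominates (u w : T) : Prop :=
  w <> u /\ forall m, P m -> m = w \/ e m w -> m = u \/ e m u.

Definition dominates_exactly_three : Prop :=
  exists2 u, P u & exists a b c, [/\ P a, P b & P c] /\ [/\ a <> b, a <> c & b <> c] /\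
    forall w, P w -> (dominates u w <-> (w = a \/ w = b \/ w = c)).

End Domination.

Lemma no_four_in_three (T : Type) (a b c x1 x2 x3 x4 : T) :
  (x1 = a \/ x1 = b \/ x1 = c) -> (x2 = a \/ x2 = b \/ x2 = c) ->
  (x3 = a \/ x3 = b \/ x3 = c) -> (x4 = a \/ x4 = b \/ x4 = c) ->
  x1 <> x2 -> x1 <> x3 -> x1 <> x4 -> x2 <> x3 -> x2 <> x4 -> x3 <> x4 -> False.
Proof. by move=> [->|[->|->]] [->|[->|->]] [->|[->|->]] [->|[->|->]]. Qed.

Section Transport.
Variables (T1 T2 : Type) (e1 : T1 -> T1 -> Prop) (e2 : T2 -> T2 -> Prop).
Variables (P1 : T1 -> Prop) (P2 : T2 -> Prop) (s : T1 -> T2).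
Hypothesis s_map : forall x, P1 x -> P2 (s x).
Hypothesis s_onto : forall y, P2 y -> exists2 x, P1 x & s x = y.
Hypothesis s_inj : forall x y, P1 x -> P1 y -> s x = s y -> x = y.
Hypothesis s_adj : forall x y, P1 x -> P1 y -> (e1 x y <-> e2 (s x) (s y)).

Let s_eq x y : P1 x -> P1 y -> (x = y <-> s x = s y).
Proof. by move=> Px Py; split=> [->|]; last exact: s_inj. Qed.

Lemma dominates_transport u w : P1 u -> P1 w ->
  dominates e1 P1 u w <-> dominates e2 P2 (s u) (s w).
Proof.
move=> Pu Pw; split=> -[wu dom]; split.
- by move/(s_inj Pw Pu).
- move=> _ /s_onto[m Pm <-].
  by rewrite -(s_eq Pm Pw) -(s_eq Pm Pu) -(s_adj Pm Pw) -(s_adj Pm Pu); apply: dom.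
- by move=> wu'; apply: wu; rewrite wu'.
- move=> m Pm; rewrite (s_eq Pm Pw) (s_eq Pm Pu) (s_adj Pm Pw) (s_adj Pm Pu).
  exact: dom (s_map Pm).
Qed.

Lemma dominates_exactly_three_transport :
  dominates_exactly_three e1 P1 <-> dominates_exactly_three e2 P2.
Proof.
split.
- move=> [u Pu [a [b [c [[Pa Pb Pc] [[ab ac bc] dom]]]]]].
  exists (s u); first exact: s_map.
  exists (s a), (s b), (s c); split; first by split; apply: s_map.
  split; first by split=> /s_inj; auto.
  move=> _ /s_onto[w Pw <-].
  by rewrite -(dominates_transport Pu Pw) (dom _ Pw) (s_eq Pw Pa) (s_eq Pw Pb) (s_eq Pw Pc).
- move=> [_ /s_onto[u Pu <-] [_ [_ [_ [[/s_onto[a Pa <-] /s_onto[b Pb <-] /s_onto[c Pc <-]]]]]]].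
  move=> [[ab ac bc] dom].
  exists u => //; exists a, b, c; split=> //.
  split; first by split=> E; [apply: ab|apply: ac|apply: bc]; rewrite E.
  move=> w Pw.
  by rewrite (dominates_transport Pu Pw) (dom _ (s_map Pw)) (s_eq Pw Pa) (s_eq Pw Pb) (s_eq Pw Pc).
Qed.

End Transport.

Lemma dominates_exactly_three_induced_iso (V : Type) (e : V -> V -> Prop) (A B : V -> Prop) :
  induced_iso e A B -> dominates_exactly_three e B -> dominates_exactly_three e A.
Proof.
move=> [f [[g fK gK] f_adj]].
pose s x := if boolp.pselect (A x) is left Ax then proj1_sig (f (exist _ x Ax)) else x.
have sE x (Ax : A x) : s x = proj1_sig (f (exist _ x Ax)).
  by rewrite /s; case: boolp.pselect => // Ax'; rewrite (boolp.Prop_irrelevance Ax' Ax).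
have sig_inj (P : V -> Prop) (a b : sig P) : proj1_sig a = proj1_sig b -> a = b.
  by case: a b => x Px [y Py] /= xy; subst y; rewrite (boolp.Prop_irrelevance Px Py).
suff iso : dominates_exactly_three e A <-> dominates_exactly_three e B by move/iso.
apply: (@dominates_exactly_three_transport _ _ e e A B s).
- by move=> x Ax; rewrite (sE x Ax); apply: proj2_sig.
- move=> y By; case E: (g (exist _ y By)) => [x Ax].
  by exists x; rewrite // (sE x Ax) -E gK.
- move=> x y Ax Ay; rewrite (sE x Ax) (sE y Ay) => /sig_inj/(can_inj fK).
  by move/(congr1 (@proj1_sig _ _)).
- by move=> x y Ax Ay; rewrite (sE x Ax) (sE y Ay); exact: (f_adj (exist _ x Ax) (exist _ y Ay)).
Qed.

(** * Comparability under divisibility *)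

Definition dvd_comparable (m n : nat) : bool := (m %| n) || (n %| m).

Lemma dvd_comparable_refl n : dvd_comparable n n.
Proof. by rewrite /dvd_comparable dvdnn. Qed.

Definition dvd_dominates (U W : nat) : Prop :=
  forall M, 1 < M -> dvd_comparable M W -> dvd_comparable M U.

Lemma pfactor_of_prime_divisors q N : 0 < N ->
  (forall r, prime r -> r %| N -> r = q) -> N = q ^ logn q N.
Proof.
move=> N0 qN; rewrite -p_part part_pnat_id //.
by apply/pnatP => // r rP /(qN r rP) ->; rewrite inE.
Qed.

Lemma dvd_dominates_pow q a c : prime q -> a <= c -> dvd_dominates (q ^ a) (q ^ c).
Proof.
move=> qP ac M _ /orP[/(dvdn_pfactor _ _ qP)[s _ ->] | cM].
- by rewrite /dvd_comparable !dvdn_Pexp2l ?prime_gt1 // leq_total.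
- by rewrite /dvd_comparable (dvdn_trans (dvdn_exp2l q ac) cM) orbT.
Qed.

Lemma dvd_dominates_dvdn U W : 1 < U -> 1 < W -> U != W -> dvd_dominates U W -> U %| W.
Proof.
move=> U1 W1 UW dom; have /orP[/dvdnP[k Uk] | //] := dom W W1 (dvd_comparable_refl W).
have k1 : 1 < k by case: k Uk => [|[|k]] Uk; rewrite // Uk ?mul1n ?eqxx in U1 UW.
have := dom (W * k.+1); rewrite /dvd_comparable dvdn_mulr // orbT.
move=> /(_ (leq_trans W1 (leq_pmulr W (ltn0Sn k))) isT).
rewrite Uk [k * W]mulnC !(dvdn_pmul2l (ltnW W1)) => /orP[/dvdn_leq | ].
- by move=> /(_ (ltnW k1)); rewrite ltnn.
- by rewrite -addn1 (dvdn_addr 1 (dvdnn k)) dvdn1 => /eqP k_eq1; rewrite k_eq1 in k1.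
Qed.

Lemma dvd_comparable_prime r U : prime r -> 1 < U -> dvd_comparable r U -> r %| U.
Proof.
move=> rP U1 /orP[// | Ur].
by rewrite -(prime_nt_dvdP rP _ Ur) ?neq_ltn ?U1 ?orbT.
Qed.

Lemma pfactor_of_dvd_comparable p W : prime p -> 0 < W ->
  (forall M, 1 < M -> M %| W -> dvd_comparable M p) -> W = p ^ logn p W.
Proof.
move=> pP W0 dom; apply: pfactor_of_prime_divisors => // r rP rW.
have rp : r %| p by apply: dvd_comparable_prime rP (prime_gt1 pP) (dom r (prime_gt1 rP) rW).
by apply/eqP; rewrite -dvdn_prime2.
Qed.

Lemma dvd_dominates_pfactor U W : 1 < U -> 0 < W -> U %| W -> U != W ->
  (forall M, 1 < M -> M %| W -> dvd_comparable M U) ->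
  exists q a b, [/\ prime q, U = q ^ a & W = q ^ b].
Proof.
move=> U1 W0 /dvdnP[k Wk] UW dom.
have k1 : 1 < k by case: k Wk => [|[|k]] Wk; rewrite // Wk ?mul1n ?eqxx in W0 UW.
have qP : prime (pdiv k) := pdiv_prime k1.
have Uq r : prime r -> r %| U -> r = pdiv k.
  move=> rP rU; apply/eqP; apply: contraT => rq.
  have [V UV] : exists V, U = V * r by exists (U %/ r); rewrite divnK.
  have V0 : 0 < V by case: V UV => // UV; rewrite UV in U1.
  have M1 : 1 < V * pdiv k by rewrite (leq_trans (prime_gt1 qP)) ?leq_pmull.
  have MW : V * pdiv k %| W by rewrite Wk UV mulnCA dvdn_pmul2l // dvdn_mulr // pdiv_dvd.
  have /orP[] := dom _ M1 MW; rewrite UV !(dvdn_pmul2l V0) dvdn_prime2 //.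
  - by move/eqP=> qr; rewrite qr eqxx in rq.
  - by move/eqP=> rq'; rewrite rq' eqxx in rq.
exists (pdiv k), (logn (pdiv k) U), (logn (pdiv k) W); split=> //.
  exact: pfactor_of_prime_divisors (ltnW U1) Uq.
apply: pfactor_of_prime_divisors => // r rP rW.
by apply: Uq rP (dvd_comparable_prime rP U1 (dom r (prime_gt1 rP) rW)).
Qed.

Lemma dvd_dominates_sqr U W : 1 < U -> 1 < W -> U != W -> dvd_dominates U W ->
  U < W /\ dvd_dominates U (W * W).
Proof.
move=> U1 W1 UW dom; have UdW := dvd_dominates_dvdn U1 W1 UW dom.
split; first by rewrite ltn_neqAle UW dvdn_leq // ltnW.
have [q [a [b [qP EU EW]]]] : exists q a b, [/\ prime q, U = q ^ a & W = q ^ b].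
  apply: dvd_dominates_pfactor (ltnW W1) UdW UW _ => // M M1 MW.
  by apply: dom; rewrite /dvd_comparable ?MW.
have ab : a <= b by rewrite -(dvdn_Pexp2l _ _ (prime_gt1 qP)) -EU -EW.
by rewrite EU EW -expnD; apply: dvd_dominates_pow qP (leq_trans ab (leq_addr _ _)).
Qed.

Definition div_adj (m n : int) : Prop := m <> n /\ dvd_comparable (absz m) (absz n).

Definition abs_gt1 (n : int) : Prop := 1 < absz n.

Lemma div_adj_closed m w : m = w \/ div_adj m w <-> dvd_comparable (absz m) (absz w).
Proof.
split=> [[-> | [] //] | mw]; first exact: dvd_comparable_refl.
by case: (eqVneq m w) => [-> | /eqP]; [left | right].
Qed.

Lemma dominates_div_adj (P : int -> Prop) u w :
  dominates div_adj P u w <->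
  w <> u /\ forall m, P m -> dvd_comparable (absz m) (absz w) -> dvd_comparable (absz m) (absz u).
Proof.
by split=> -[wu dom]; split=> // m Pm; have := dom m Pm; rewrite !div_adj_closed.
Qed.

Lemma dominates_abs_gt1 u w :
  dominates div_adj abs_gt1 u w <-> w <> u /\ dvd_dominates (absz u) (absz w).
Proof.
rewrite dominates_div_adj; split=> -[wu dom]; split=> // M M1.
- exact: (dom (Posz M)).
- exact: dom.
Qed.

Lemma abs_gt1_not_dominates_exactly_three : ~ dominates_exactly_three div_adj abs_gt1.
Proof.
move=> [u u1 [a [b [c [[Pa Pb Pc] [[ab ac bc] dom3]]]]]].
have domE w : abs_gt1 w -> w <> u -> dvd_dominates (absz u) (absz w) ->
    w = a \/ w = b \/ w = c.
  by move=> w1 wu uw; apply/(dom3 w w1)/dominates_abs_gt1.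
have [w [w1 wabc wu wNu]] : exists w, [/\ abs_gt1 w, w = a \/ w = b \/ w = c,
    w <> u & w <> (- u)%R].
  have abc_ne_u w : abs_gt1 w -> w = a \/ w = b \/ w = c -> w <> u.
    by move=> w1 /(dom3 w w1) [].
  case: (eqVneq a (- u)%R) => [aNu | /eqP aNu].
  - by exists b; split; auto; rewrite -aNu => /esym.
  - by exists a; split; auto.
(* [u] always dominates [-u]; any other [w] it dominates makes [|u|] and [|w|]
   powers of one prime, and then [-w] and [|w|^2] are dominated as well. *)
have [_ dom_uw] := (dominates_abs_gt1 u w).1 ((dom3 w w1).2 wabc).
have [|ltUW domW2] := dvd_dominates_sqr u1 w1 _ dom_uw; first by apply/eqP; lia.
move: u1 w1; rewrite /abs_gt1 => u1 w1.
apply: (no_four_in_three (domE (- u)%R _ _ _) wabc (domE (- w)%R _ _ _)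
          (domE (absz w * absz w)%N _ _ _)); rewrite /abs_gt1 ?abszN //; try nia.
Qed.

Lemma dvd_closed_dominates_exactly_three p (T : int -> Prop) : prime p ->
  (forall n, T n -> abs_gt1 n) -> (forall n, T n -> ~~ (p ^ 3 %| absz n)) ->
  (forall n d, T n -> abs_gt1 d -> absz d %| absz n -> T d) ->
  T (p * p)%N -> dominates_exactly_three div_adj T.
Proof.
move=> pP T1 Tp3 Tdvd Tpp; have p1 := prime_gt1 pP.
have Tpp_dvd d : abs_gt1 d -> absz d %| p * p -> T d := Tdvd _ d Tpp.
have dom_p_pp : dvd_dominates p (p * p).
  by have := @dvd_dominates_pow p 1 2 pP isT; rewrite expn1 expnS expn1.
exists (Posz p); first by apply: Tpp_dvd; rewrite ?dvdn_mulr.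
exists (- Posz p)%R, (Posz (p * p)), (- Posz (p * p))%R; split.
  by split; apply: Tpp_dvd; rewrite /abs_gt1 ?abszN /= ?dvdnn ?dvdn_mulr //; nia.
split; first by split; nia.
move=> w Tw; have w1 := T1 _ Tw; rewrite dominates_div_adj; split.
- move=> [wp dom]; have /orP[wdp | pdw] := dom w Tw (dvd_comparable_refl _).
  + have /(prime_nt_dvdP pP) Ew : absz w != 1 by rewrite neq_ltn w1 orbT.
    by move/Ew: wdp; lia.
  + have Ew : absz w = p ^ logn p (absz w).
      apply: pfactor_of_dvd_comparable (ltnW w1) _ => // M M1 Mw.
      by apply: (dom (Posz M)); [exact: (Tdvd w (Posz M) Tw M1 Mw) | rewrite /dvd_comparable /= Mw].
    have e_gt0 : 0 < logn p (absz w) by move: w1; rewrite /abs_gt1 {1}Ew; case: logn.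
    have e_le2 : logn p (absz w) <= 2.
      by rewrite leqNgt; apply: contra (Tp3 _ Tw) => e3; rewrite Ew dvdn_exp2l.
    have [wE | wE] : absz w = p \/ absz w = (p * p)%N.
      by rewrite Ew; case: logn e_gt0 e_le2 => [|[|[|]]] //; [left | right].
    * by lia.
    * by lia.
- move=> wabc; split; first by nia.
  move=> m Tm; case: wabc => [-> | [-> | ->]]; rewrite ?abszN //= => mw.
  all: exact: dom_p_pp (T1 _ Tm) mw.
Qed.

(** * The graphs [O(x)] and [I(x)] of a torsion-free abelian group *)

Local Open Scope ring_scope.

Lemma zpow_mulrz (V : zmodType) (x : V) (n : int) : zpow +%R 0 -%R x n = x *~ n.
Proof.
have npowE k : npow +%R 0 x k = x *+ k by elim: k => // k IHk; rewrite mulrS -IHk.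
by case: n => k; rewrite /zpow npowE.
Qed.

(* [Defs.arc] is qualified because [path.arc] shadows it. *)
Lemma arc_mulrz (V : zmodType) (x y : V) :
  Defs.arc +%R 0 -%R x y <-> x <> y /\ exists2 n, n != 0 & y = x *~ n.
Proof.
by split=> -[xy [n]]; [case; rewrite zpow_mulrz | rewrite -zpow_mulrz]; split=> //; exists n.
Qed.

Section TorsionFree.
Variable V : zmodType.
Hypothesis tfV : forall (x : V) (n : int), n != 0 -> x *~ n = 0 -> x = 0.

Local Notation adjV := (adj (@GRing.add V) 0 (@GRing.opp V)).

Lemma mulrIz_tf (x : V) : x != 0 -> injective ( *~%R x).
Proof.
move=> x0 m n mn; apply/eqP; rewrite -subr_eq0; apply: contraNT x0 => mn0.
by apply/eqP/(tfV mn0); rewrite mulrzBr mn subrr.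
Qed.

Lemma mulIrz_tf (n : int) : n != 0 -> injective (fun x : V => x *~ n).
Proof.
move=> n0 x y /= xy; apply/eqP; rewrite -subr_eq0; apply/eqP/(tfV n0).
by rewrite mulrzBl xy subrr.
Qed.

Lemma mulrz_neq0_tf (x : V) n : x != 0 -> n != 0 -> x *~ n != 0.
Proof. by move=> x0 n0; apply: contra x0 => /eqP/(tfV n0)->. Qed.

Lemma Oset_mulrz (x y : V) : x != 0 ->
  Oset +%R 0 -%R x y <-> exists2 n, abs_gt1 n & y = x *~ n.
Proof.
move=> x0; rewrite /Oset arc_mulrz; split.
- move=> [yNx [xy [n n0 yE]]]; exists n => //.
  have n1 : n != 1 by apply: contra_not_neq xy => n1; rewrite yE n1.
  have nN1 : n != -1 by apply: contra_not_neq yNx => nN1; rewrite yE nN1 mulrN1z.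
  by rewrite /abs_gt1; lia.
- move=> [n]; rewrite /abs_gt1 => n1 ->; split; [|split; last by exists n => //; lia].
  + by rewrite -mulrN1z => /(mulrIz_tf x0); lia.
  + by rewrite -{1}(mulr1z x) => /(mulrIz_tf x0); lia.
Qed.

Lemma Iset_mulrz (x y : V) : x != 0 ->
  Iset +%R 0 -%R x y <-> exists2 n, abs_gt1 n & y *~ n = x.
Proof.
move=> x0; rewrite /Iset arc_mulrz; split.
- move=> [yNx [yx [n n0 xE]]]; exists n; last by rewrite xE.
  have n1 : n != 1 by apply: contra_not_neq yx => n1; rewrite xE n1.
  have nN1 : n != -1 by apply: contra_not_neq yNx => nN1; rewrite xE nN1 mulrN1z opprK.
  by rewrite /abs_gt1; lia.
- move=> [n]; rewrite /abs_gt1 => n1 xE; split; [|split; last by exists n; [lia | rewrite xE]].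
  + move=> yNx; have : x *~ (- n) = x *~ 1 by rewrite mulrNz -mulNrz -yNx xE.
    by move/(mulrIz_tf x0); lia.
  + move=> yx; have : x *~ n = x *~ 1 by rewrite -{1}yx xE.
    by move/(mulrIz_tf x0); lia.
Qed.

Lemma arc_mulrz_multiples (x : V) (a b : int) : x != 0 -> b != 0 ->
  Defs.arc +%R 0 -%R (x *~ a) (x *~ b) <-> a <> b /\ (a %| b)%Z.
Proof.
move=> x0 b0; rewrite arc_mulrz; split.
- move=> [ab [k _ /esym]]; rewrite -mulrzA => /(mulrIz_tf x0) bE.
  by split=> [ab'|]; [apply: ab; rewrite ab' | apply/dvdzP; exists k; rewrite mulrC].
- move=> [ab /dvdzP[k bE]]; split; first by move/(mulrIz_tf x0).
  by exists k; [apply: contra b0; rewrite bE => /eqP->; rewrite mul0r | rewrite -mulrzA bE mulrC].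
Qed.

Lemma adj_mulrz_multiples (x : V) (a b : int) : x != 0 -> a != 0 -> b != 0 ->
  adjV (x *~ a) (x *~ b) <-> div_adj a b.
Proof.
move=> x0 a0 b0; rewrite /adj !arc_mulrz_multiples // /div_adj /dvd_comparable -!dvdzE.
split=> [[[ab ->] | [ba ->]] | [ab /orP[] ?]]; first by [].
- by rewrite orbT; split=> // /esym.
- by left.
- by right; split=> // /esym.
Qed.

Lemma arc_mulrz_roots (x y z : V) (a b : int) : x != 0 -> y *~ a = x -> z *~ b = x ->
  Defs.arc +%R 0 -%R y z <-> a <> b /\ (b %| a)%Z.
Proof.
move=> x0 yE zE.
have y0 : y != 0 by apply: contraNneq x0 => y0; rewrite -yE y0 mul0rz.
have a0 : a != 0 by apply: contraNneq x0 => a0; rewrite -yE a0 mulr0z.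
have b0 : b != 0 by apply: contraNneq x0 => b0; rewrite -zE b0 mulr0z.
rewrite arc_mulrz; split.
- move=> [yz [k _ zk]]; split.
    by move=> ab; apply: yz; apply: (mulIrz_tf a0); rewrite yE ab zE.
  by apply/dvdzP; exists k; apply: (mulrIz_tf y0); rewrite mulrzA -zk yE zE.
- move=> [ab /dvdzP[k aE]]; split.
    by move=> yz; apply: ab; apply: (mulrIz_tf y0); rewrite yE yz zE.
  exists k; first by apply: contra a0; rewrite aE => /eqP->; rewrite mul0r.
  by apply: (mulIrz_tf b0); rewrite /= -mulrzA -aE yE zE.
Qed.

Lemma adj_mulrz_roots (x y z : V) (a b : int) : x != 0 -> y *~ a = x -> z *~ b = x ->
  adjV y z <-> div_adj a b.
Proof.
move=> x0 yE zE; rewrite /adj (arc_mulrz_roots x0 yE zE) (arc_mulrz_roots x0 zE yE).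
rewrite /div_adj /dvd_comparable -!dvdzE.
split=> [[[ab ->] | [ba ->]] | [ab /orP[] ?]].
- by rewrite orbT.
- by split=> // /esym.
- by right; split=> // /esym.
- by left.
Qed.

Lemma Oset_not_dominates_exactly_three (x : V) : x != 0 ->
  ~ dominates_exactly_three adjV (Oset +%R 0 -%R x).
Proof.
move=> x0; have n0 n : abs_gt1 n -> n != 0 by rewrite /abs_gt1; lia.
suff iso : dominates_exactly_three div_adj abs_gt1 <->
           dominates_exactly_three adjV (Oset +%R 0 -%R x).
  by move/iso/abs_gt1_not_dominates_exactly_three.
apply: (dominates_exactly_three_transport (s := fun n => x *~ n)).
- by move=> n n1; apply/Oset_mulrz => //; exists n.
- by move=> y /(Oset_mulrz _ x0) [n n1 ->]; exists n.
- by move=> m n _ _ /(mulrIz_tf x0).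
- by move=> m n m1 n1; rewrite adj_mulrz_multiples ?n0.
Qed.

Definition root (x : V) (n : int) : V := classical_sets.xget 0 (fun z => z *~ n = x).

Lemma rootK (x : V) n : (exists z, z *~ n = x) -> root x n *~ n = x.
Proof. exact: classical_sets.xgetPex. Qed.

Lemma Iset_dominates_exactly_three (x : V) p : x != 0 -> prime p ->
  (exists y, y *~ (p * p)%N = x) -> (forall z, z *~ (p ^ 3)%N <> x) ->
  dominates_exactly_three adjV (Iset +%R 0 -%R x).
Proof.
move=> x0 pP xpp xp3; have n0 n : abs_gt1 n -> n != 0 by rewrite /abs_gt1; lia.
pose T n := abs_gt1 n /\ exists z, z *~ n = x.
have mulrz_dvd n d : (d %| n)%Z -> (exists z, z *~ n = x) -> exists z, z *~ d = x.
  by move=> /dvdzP[k ->] [z zE]; exists (z *~ k); rewrite -mulrzA.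
suff iso : dominates_exactly_three div_adj T <-> dominates_exactly_three adjV (Iset +%R 0 -%R x).
  apply/iso/(dvd_closed_dominates_exactly_three pP).
  - by move=> n [].
  - move=> n [_ xn]; apply/negP => p3n.
    by have [z] := mulrz_dvd n (p ^ 3)%N p3n xn; apply: xp3.
  - by move=> n d [_ xn] d1 dn; split; last exact: mulrz_dvd xn.
  - by split=> //; rewrite /abs_gt1 /=; have := prime_gt1 pP; nia.
have rootT n : T n -> root x n *~ n = x by case=> _; apply: rootK.
apply: (dominates_exactly_three_transport (s := root x)).
- by move=> n Tn; apply/Iset_mulrz => //; exists n; [case: Tn | apply: rootT].
- move=> y /(Iset_mulrz _ x0) [n n1 yE]; have Tn : T n by split=> //; exists y.
  by exists n => //; apply: (mulIrz_tf (n0 _ n1)); rewrite /= rootT.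
- move=> m n Tm Tn mn; have := rootT _ Tm; rewrite mn -{2}(rootT _ Tn).
  by apply: mulrIz_tf; apply: contraNneq x0 => r0; rewrite -(rootT _ Tn) r0 mul0rz.
- by move=> m n Tm Tn; rewrite (adj_mulrz_roots x0 (rootT _ Tm) (rootT _ Tn)).
Qed.

(** * Divisibility and the rational coordinate *)

Section Divisible.
Hypothesis isoV : forall x : V, induced_iso adjV (Oset +%R 0 -%R x) (Iset +%R 0 -%R x).

Lemma divisible_prime p (y : V) : prime p -> exists z, z *~ p = y.
Proof.
move=> pP; apply: boolp.contrapT => ndiv.
have pp0 : (p * p)%N != 0 :> int by rewrite eqz_nat muln_eq0 orbb -lt0n prime_gt0.
have x0 : y *~ (p * p)%N != 0.
  apply: mulrz_neq0_tf pp0; apply: contra_not_neq ndiv => ->.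
  by exists 0; rewrite mul0rz.
apply: (Oset_not_dominates_exactly_three x0).
apply: dominates_exactly_three_induced_iso (isoV _) _.
apply: (Iset_dominates_exactly_three x0 pP); first by exists y.
move=> z zE; apply: ndiv; exists z; apply: (mulIrz_tf pp0).
by rewrite /= -mulrzA -PoszM -zE !expnS expn0 muln1.
Qed.

Lemma divisible n (y : V) : (0 < n)%N -> exists z, z *~ n = y.
Proof.
elim/ltn_ind: n y => n IHn y n0; have [n1 | n1] := leqP n 1.
  by exists y; have -> : n = 1%N by apply/anti_leq/andP.
have pP := pdiv_prime n1; have [z1 <-] := divisible_prime y pP.
have lt_n : (n %/ pdiv n < n)%N by rewrite ltn_Pdiv ?prime_gt1 // ltnW.
have gt0 : (0 < n %/ pdiv n)%N by rewrite divn_gt0 ?prime_gt0 // dvdn_leq ?pdiv_dvd // ltnW.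
have [z2 <-] := IHn _ lt_n z1 gt0.
by exists z2; rewrite -mulrzA -PoszM divnK ?pdiv_dvd.
Qed.

End Divisible.

Section RatCoord.
Variable g : V.
Hypothesis g0 : g != 0.

Definition rat_coord (y : V) : rat :=
  let mk := classical_sets.xget (1, 0) (fun mk : int * int => mk.1 != 0 /\ y *~ mk.1 = g *~ mk.2) in
  mk.2%:~R / mk.1%:~R.

Lemma rat_coordE (y : V) m k : m != 0 -> y *~ m = g *~ k -> rat_coord y = k%:~R / m%:~R.
Proof.
move=> m0 ymk; rewrite /rat_coord.
have ex : exists mk : int * int, mk.1 != 0 /\ y *~ mk.1 = g *~ mk.2 by exists (m, k).
move: (classical_sets.xgetPex (1, 0) ex); case: classical_sets.xget => m' k' /= [m'0 ymk'].
have km : k' * m = k * m' by apply: (mulrIz_tf g0); rewrite !mulrzA -ymk -ymk' -!mulrzA mulrC.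
by apply/eqP; rewrite eqr_div ?intr_eq0 // -!intrM km.
Qed.

Hypothesis lcV : forall a b : V, exists h i j, a = h *~ i /\ b = h *~ j.

Lemma rat_coord_ex (y : V) : exists m k, [/\ m != 0, y *~ m = g *~ k & rat_coord y = k%:~R / m%:~R].
Proof.
have [h [i [j [gE yE]]]] := lcV g y.
have i0 : i != 0 by apply: contraNneq g0 => i0; rewrite gE i0 mulr0z.
have yig : y *~ i = g *~ j by rewrite gE yE -!mulrzA mulrC.
by exists i, j; split; last exact: rat_coordE.
Qed.

Lemma rat_coordD (y z : V) : rat_coord (y + z) = rat_coord y + rat_coord z.
Proof.
have [m [k [m0 ymk ->]]] := rat_coord_ex y.
have [m' [k' [m'0 zmk ->]]] := rat_coord_ex z.
rewrite (@rat_coordE _ (m * m') (k * m' + k' * m)) ?mulf_neq0 //.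
  by rewrite intrD !intrM; field; rewrite !intr_eq0 m0 m'0.
by rewrite mulrzDl mulrzDr {2}[m * m']mulrC !mulrzA ymk zmk.
Qed.

Lemma rat_coord_inj : injective rat_coord.
Proof.
move=> y z; have [m [k [m0 ymk ->]]] := rat_coord_ex y.
have [m' [k' [m'0 zmk ->]]] := rat_coord_ex z.
move/eqP; rewrite eqr_div ?intr_eq0 // -!intrM eqr_int => /eqP km.
apply: (mulIrz_tf (mulf_neq0 m0 m'0)); rewrite /=.
by rewrite mulrzA ymk -mulrzA km [m * m']mulrC !mulrzA zmk.
Qed.

Hypothesis divV : forall (n : nat) (y : V), (0 < n)%N -> exists z, z *~ n = y.

Lemma rat_coord_surj r : exists y, rat_coord y = r.
Proof.
have denE : (absz (denq r))%:Z = denq r by rewrite abszE gtr0_norm ?denq_gt0.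
have [z zE] : exists z, z *~ absz (denq r) = g *~ numq r by apply: divV; rewrite absz_gt0 denq_neq0.
by exists z; rewrite denE in zE; rewrite (rat_coordE _ zE) ?divq_num_den ?denq_neq0.
Qed.

Lemma rat_coord_bij : bijective rat_coord.
Proof.
pose inv r := proj1_sig (boolp.cid (rat_coord_surj r)).
have invK : cancel inv rat_coord by move=> r; rewrite /inv; case: boolp.cid.
by exists inv => // y; apply: rat_coord_inj; rewrite invK.
Qed.

End RatCoord.

End TorsionFree.

(** * Locally cyclic groups *)

Section LocallyCyclicGroup.
Variables (G : Type) (mul : G -> G -> G) (one : G) (inv : G -> G).
Hypothesis HG : is_group mul one inv.

Lemma npow_comm c x k : mul c x = mul x c -> mul c (npow mul one x k) = mul (npow mul one x k) c.
Proof.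
move=> cx; elim: k => [|k IHk] /=; first by rewrite /npow /= (grp_mulg1 HG) (grp_mul1g HG).
by rewrite /npow /= -/(npow mul one x k) (grp_assoc HG) cx -(grp_assoc HG) IHk (grp_assoc HG).
Qed.

Lemma inv_comm c x : mul c x = mul x c -> mul c (inv x) = mul (inv x) c.
Proof.
move=> cx; rewrite -[mul (inv x) c](grp_mulg1 HG) -(grp_mulgV HG x).
rewrite !(grp_assoc HG) -[mul (mul (inv x) c) x](grp_assoc HG) cx.
by rewrite (grp_assoc HG) (grp_mulVg HG) (grp_mul1g HG).
Qed.

Lemma zpow_comm c x n : mul c x = mul x c ->
  mul c (zpow mul one inv x n) = mul (zpow mul one inv x n) c.
Proof. by move=> cx; case: n => k; [apply: npow_comm | apply/inv_comm/npow_comm]. Qed.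

Lemma locally_cyclic_pair : locally_cyclic mul one inv -> forall a b : G,
  exists h i j, a = zpow mul one inv h i /\ b = zpow mul one inv h j.
Proof.
move=> lc a b; have [h [_ genE]] := lc [:: a; b].
have [i ->] : exists i, a = zpow mul one inv h i by apply/genE/gen_base; left.
have [j ->] : exists j, b = zpow mul one inv h j by apply/genE/gen_base; right; left.
by exists h, i, j.
Qed.

Lemma locally_cyclic_mulC : locally_cyclic mul one inv -> forall a b, mul a b = mul b a.
Proof.
move=> /locally_cyclic_pair lc a b; have [h [i [j [-> ->]]]] := lc a b.
by apply: zpow_comm; apply/esym/zpow_comm.
Qed.

End LocallyCyclicGroup.

Record comm_group := CommGroup {
  cg_sort : Type; cg_mul : cg_sort -> cg_sort -> cg_sort;
  cg_one : cg_sort; cg_inv : cg_sort -> cg_sort;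
  cg_is_group : is_group cg_mul cg_one cg_inv; cg_mulC : forall a b, cg_mul a b = cg_mul b a }.

Definition cg_zmod (B : comm_group) : Type := cg_sort B.
HB.instance Definition _ B := boolp.gen_eqMixin (cg_zmod B).
HB.instance Definition _ B := boolp.gen_choiceMixin (cg_zmod B).
HB.instance Definition _ (B : comm_group) := GRing.isZmodule.Build (cg_zmod B)
  (grp_assoc (cg_is_group B)) (@cg_mulC B) (grp_mul1g (cg_is_group B)) (grp_mulVg (cg_is_group B)).

Theorem mainTheorem7 (G : Type) (mul : G -> G -> G) (one : G) (inv : G -> G)
  (HG : is_group mul one inv)
  (Hnontriv : exists x : G, x <> one)
  (Htf : torsion_free mul one inv)
  (Hlc : locally_cyclic mul one inv)
  (Hiso : forall x : G, induced_iso (adj mul one inv) (Oset mul one inv x) (Iset mul one inv x)) :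
  iso_to_Q mul.
Proof.
pose V : zmodType := cg_zmod (CommGroup HG (locally_cyclic_mulC HG Hlc)).
have zpowV (x : V) n : zpow mul one inv x n = x *~ n := zpow_mulrz x n.
have tfV (x : V) n : n != 0 -> x *~ n = 0 -> x = 0.
  by rewrite -zpowV; apply: Htf.
have lcV (a b : V) : exists h i j, a = h *~ i /\ b = h *~ j.
  by have [h [i [j]]] := locally_cyclic_pair Hlc a b; rewrite !zpowV; exists h, i, j.
have divV n (y : V) : (0 < n)%N -> exists z, z *~ n = y := divisible tfV Hiso y.
have [g g0] : exists g : V, g != 0 by have [g g1] := Hnontriv; exists g; apply/eqP.
exists (rat_coord g); split; first exact (rat_coord_bij tfV g0 lcV divV).
exact (rat_coordD tfV g0 lcV).
Qed.
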